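(* Let $\mathbb{K}$ be a field of characteristic $0$, $R=\mathbb{K}[x_1,\dots,x_n]$, and $I\subset R$ a monomial ideal such that $A=R/I$ is a level Artinian graded algebra of socle degree $t$. Let $\ell=x_1+\dots+x_n$. Then for every integer $k<t/2$ the multiplication maps $\times\ell^{t-2k}:A_k\to A_{t-k}$ and $\times\ell:A_k\to A_{k+1}$ are injective.
   Context: $A=R/I$ is standard graded, $A=A_0\oplus A_1\oplus\dots\oplus A_t$ with $A_t\neq 0$ (Artinian). The socle of $A$ is $\{f\in A: af=0 \text{ for all } a\in A_1\}$; $A$ is level if its socle equals $A_t$, and then $t$ is the socle degree. *)

From HB Require Import structures.
From mathcomp Require Import all_boot all_order all_algebra.
From mathcomp Require Import mpoly.
Set Implicit Arguments. Unset Strict Implicit. Unset Printing Implicit Defensive.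
Import GRing.Theory.
Local Open Scope ring_scope.

Definition homog_deg (n : nat) (K : fieldType) (d : nat) (p : {mpoly K[n]}) : bool :=
  p \is @ishomog1 n K d (@mdeg n).

Definition is_ideal (n : nat) (K : fieldType) (I : {pred {mpoly K[n]}}) : Prop :=
  [/\ 0 \in I,
      (forall p q, p \in I -> q \in I -> p + q \in I) &
      (forall r p, p \in I -> r * p \in I)].

(* I is a monomial ideal: an ideal generated by monomials, i.e. an ideal
   such that every monomial occurring in an element of I lies in I. *)
Definition is_monomial_ideal (n : nat) (K : fieldType) (I : {pred {mpoly K[n]}}) : Prop :=
  is_ideal I /\
  (forall p m, p \in I -> m \in msupp p -> 'X_[m] \in I).

Definition graded_piece_zero (n : nat) (K : fieldType) (I : {pred {mpoly K[n]}}) (d : nat) : Prop :=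
  forall p : {mpoly K[n]}, homog_deg d p -> p \in I.

Definition artinian_socle_degree (n : nat) (K : fieldType) (I : {pred {mpoly K[n]}}) (t : nat) : Prop :=
  (forall d, (t < d)%N -> graded_piece_zero I d) /\ ~ graded_piece_zero I t.

Definition in_socle (n : nat) (K : fieldType) (I : {pred {mpoly K[n]}}) (f : {mpoly K[n]}) : Prop :=
  forall a : {mpoly K[n]}, homog_deg 1 a -> a * f \in I.

Definition is_level (n : nat) (K : fieldType) (I : {pred {mpoly K[n]}}) (t : nat) : Prop :=
  forall f : {mpoly K[n]},
    in_socle I f <-> exists g : {mpoly K[n]}, homog_deg t g /\ f - g \in I.

Definition mult_injective (n : nat) (K : fieldType) (I : {pred {mpoly K[n]}})
  (g : {mpoly K[n]}) (k : nat) : Prop :=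
  forall f : {mpoly K[n]}, homog_deg k f -> g * f \in I -> f \in I.

Definition ell (n : nat) (K : fieldType) : {mpoly K[n]} := \sum_(i < n) 'X_i.

From HB Require Import structures.
From mathcomp Require Import all_boot all_order all_algebra.
From mathcomp Require Import mpoly.
From mathcomp Require Import ring zify.
Set Implicit Arguments. Unset Strict Implicit. Unset Printing Implicit Defensive.
Import GRing.Theory.
Local Open Scope ring_scope.

(* Fix a monomial M and consider functions c on exponents b <= M (the "box"
   of M; its span is K[x]/(x_i^(M_i+1)), a tensor product of truncated
   polynomial rings).  Multiplication by ell restricted to the box is
   L = sum_i L_i, L_i raising coordinate i, and we pair it with the lowering
   operator F = sum_i F_i, F_i c (b) = (b_i+1)(M_i-b_i) c(b+e_i).  These form
   an sl2-triple coordinatewise: [F_i, L_j] = 0 for i <> j and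
   [F_i, L_i] = M_i - 2 b_i, hence [F, L] = |M| - 2 deg on the box.  Iterating
   the commutator, the usual sl2 argument gives hard Lefschetz for the box in
   characteristic 0: a degree-k function killed by L^(|M|-2k) is zero.

   For A = R/I: if ell^(t-2k) f lies in I and X^m is a monomial of f outside
   I, levelness extends m to a monomial M of degree t with X^M outside I (a
   standard monomial that cannot be extended lies in the socle, hence in
   degree t).  As I is monomial, the box coefficients of ell^(t-2k) f vanish,
   i.e. L^(|M|-2k) kills the box restriction of f, so the coefficient of X^m
   in f is zero: a contradiction.  Injectivity of ell then follows since
   ell^(t-2k) is a multiple of ell. *)

Lemma lem_addU n (b M : 'X_{1..n}) (i : 'I_n) :
  (b + U_(i) <= M)%MM = (b <= M)%MM && (b i < M i)%N.
Proof.
apply/mnm_lepP/andP => [bUM|[/mnm_lepP bM biM] l].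
  split; last by have := bUM i; rewrite mnmDE mnm1E eqxx addn1.
  by apply/mnm_lepP => l; apply: leq_trans (bUM l); rewrite mnmDE leq_addr.
by rewrite mnmDE mnm1E; case: eqP => [<-|_]; rewrite ?addn1 ?addn0.
Qed.

(* Steps in two different coordinates commute, despite truncated subtraction. *)
Lemma mnm_swap n (b : 'X_{1..n}) (i j : 'I_n) :
  i != j -> (b - U_(i) + U_(j) = b + U_(j) - U_(i))%MM.
Proof.
move=> ij; apply/mnmP=> l; rewrite !(mnmDE, mnmBE, mnm1E).
have [il|il] := eqVneq i l; have [jl|jl] := eqVneq j l => /=; try lia.
by move: ij; rewrite il jl eqxx.
Qed.

Section BoxSl2.
Variables (K : fieldType) (n : nat) (M : 'X_{1..n}).
Local Notation mon := 'X_{1..n}.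
Local Notation coefs := (mon -> K).

(* Raising operator in coordinate i: multiplication by x_i, truncated to the box. *)
Definition raise (i : 'I_n) (c : coefs) : coefs :=
  fun b => if (b <= M)%MM && (0 < b i)%N then c (b - U_(i))%MM else 0.

(* Lowering operator in coordinate i, weighted so that [lower i, raise i] is diagonal. *)
Definition lower (i : 'I_n) (c : coefs) : coefs :=
  fun b => ((b i).+1 * (M i - b i))%:R * c (b + U_(i))%MM.

Definition Lop (c : coefs) : coefs := fun b => \sum_(i < n) raise i c b.
Definition Fop (c : coefs) : coefs := fun b => \sum_(i < n) lower i c b.

Lemma raise_lowerC (i j : 'I_n) c b : i != j -> (b <= M)%MM ->
  lower j (raise i c) b = raise i (lower j c) b.
Proof.
move=> ij bM; rewrite /lower /raise bM lem_addU bM /= mnmDE mnmBE !mnm1E.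
rewrite (negbTE ij) eq_sym (negbTE ij) addn0 subn0 mnm_swap //.
have [bjM|bjM] := ltnP (b j) (M j); first by case: (0 < b i)%N; rewrite ?mulr0.
by rewrite (_ : M j - b j = 0)%N ?muln0 ?mul0r; [case: ifP | apply/eqP; rewrite subn_eq0].
Qed.

Lemma lower_raise_diag (i : 'I_n) c b : (b <= M)%MM ->
  lower i (raise i c) b = ((b i).+1 * (M i - b i))%:R * c b.
Proof.
move=> bM; rewrite /lower /raise lem_addU bM mnmDE mnm1E eqxx addn1 addmK /=.
have [//|biM] := ltnP (b i) (M i).
by rewrite (_ : M i - b i = 0)%N ?muln0 ?mul0r ?mulr0 //; apply/eqP; rewrite subn_eq0.
Qed.

Lemma raise_lower_diag (i : 'I_n) c b : (b <= M)%MM ->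
  raise i (lower i c) b = (b i * (M i - b i).+1)%:R * c b.
Proof.
move=> bM; rewrite /lower /raise bM /=; have [bi0|bi_gt0] := posnP (b i).
  by rewrite bi0 mul0n mul0r.
rewrite mnmBE mnm1E eqxx submK ?lep1mP -?lt0n // subn1 prednK //.
by move/mnm_lepP: bM => /(_ i) biM; congr ((_ * _)%:R * _); lia.
Qed.

Lemma raise_sum (i : 'I_n) (F : 'I_n -> coefs) b :
  raise i (fun x => \sum_(j < n) F j x) b = \sum_(j < n) raise i (F j) b.
Proof. by rewrite /raise; case: ifP => // _; rewrite big1. Qed.

Lemma Fop_raise (i : 'I_n) c b : (b <= M)%MM ->
  Fop (raise i c) b + (2 * b i)%:R * c b = raise i (Fop c) b + (M i)%:R * c b.
Proof.
move=> bM; rewrite /Fop raise_sum (bigD1 i) //= [in RHS](bigD1 i) //=.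
rewrite lower_raise_diag // raise_lower_diag //.
rewrite (eq_bigr (fun j => raise i (lower j c) b)); last first.
  by move=> j ji; rewrite raise_lowerC // eq_sym.
rewrite addrAC [RHS]addrAC -!mulrDl -!natrD.
by move/mnm_lepP: bM => /(_ i) biM; congr (_%:R * _ + _); nia.
Qed.

Lemma Fop_Lop c b : (b <= M)%MM ->
  Fop (Lop c) b + (2 * mdeg b)%:R * c b = Lop (Fop c) b + (mdeg M)%:R * c b.
Proof.
move=> bM; rewrite /Lop {1}/Fop.
under eq_bigr do rewrite /lower mulr_sumr.
rewrite exchange_big !mdegE big_distrr /= !natr_sum !mulr_suml -!big_split /=.
by apply: eq_bigr => i _; apply: Fop_raise.
Qed.

Definition in_box (c : coefs) : Prop := forall b, c b != 0 -> (b <= M)%MM.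
Definition supported_deg (k : nat) (c : coefs) : Prop :=
  forall b, c b != 0 -> mdeg b = k.

Lemma Lop_in_box c : in_box (Lop c).
Proof.
move=> b; apply: contraR => bM.
by rewrite /Lop big1 // => i _; rewrite /raise (negbTE bM).
Qed.

Lemma Fop_in_box c : in_box c -> in_box (Fop c).
Proof.
move=> hc b; apply: contraR => bM; rewrite /Fop big1 // => i _.
apply/eqP; rewrite mulf_eq0; apply/orP; right; apply: contraR bM => /hc.
by rewrite lem_addU => /andP[].
Qed.

Lemma Lop_deg k c : supported_deg k c -> supported_deg k.+1 (Lop c).
Proof.
move=> hc b; apply: contraNeq => hb; apply/eqP/big1 => i _.
rewrite /raise; case: ifP => [/andP[_ bi]|_] //; apply/eqP; apply: contraTT hb.
move=> /hc dc; rewrite negbK -(submK (_ : U_(i) <= b)%MM) ?lep1mP -?lt0n //.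
by rewrite mdegD mdeg1 dc addn1.
Qed.

Lemma Fop_deg k c : supported_deg k c -> forall b, Fop c b != 0 -> (mdeg b).+1 = k.
Proof.
move=> hc b; apply: contraNeq => hb; apply/eqP/big1 => i _.
apply/eqP; rewrite mulf_eq0; apply/orP; right; apply: contraTT hb.
by move=> /hc; rewrite negbK mdegD mdeg1 addn1 => ->.
Qed.

Lemma Lop_ext c1 c2 : c1 =1 c2 -> Lop c1 =1 Lop c2.
Proof. by move=> e b; apply: eq_bigr => i _; rewrite /raise e. Qed.

Lemma Fop_ext c1 c2 : c1 =1 c2 -> Fop c1 =1 Fop c2.
Proof. by move=> e b; apply: eq_bigr => i _; rewrite /lower e. Qed.

Lemma Lop_linear c1 c2 (a : K) b :
  Lop (fun x => c1 x + a * c2 x) b = Lop c1 b + a * Lop c2 b.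
Proof.
rewrite /Lop mulr_sumr -big_split; apply: eq_bigr => i _ /=.
by rewrite /raise; case: ifP; rewrite ?mulr0 ?addr0.
Qed.

Lemma Lop0 c : c =1 (fun _ => 0) -> Lop c =1 (fun _ => 0).
Proof. by move=> e b; rewrite (Lop_ext e) /Lop big1 // => i _; rewrite /raise if_same. Qed.

Lemma Fop0 c : c =1 (fun _ => 0) -> Fop c =1 (fun _ => 0).
Proof. by move=> e b; rewrite (Fop_ext e) /Fop big1 // => i _; rewrite /lower mulr0. Qed.

Lemma iter_Lop0 m c : c =1 (fun _ => 0) -> iter m Lop c =1 (fun _ => 0).
Proof. by elim: m => [//|m IH] e; apply/Lop0/IH. Qed.

Lemma commutator k c b : in_box c -> supported_deg k c ->
  Fop (Lop c) b = Lop (Fop c) b + ((mdeg M)%:R - (2 * k)%:R) * c b.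
Proof.
move=> bc hc; case bM: (b <= M)%MM.
  apply: (addIr ((2 * k)%:R * c b)); rewrite mulrBl addrA subrK.
  have := Fop_Lop c bM; have [->|/hc ->] := eqVneq (c b) 0; last by [].
  by rewrite !mulr0 !addr0.
have -> : c b = 0 by apply/eqP; apply: contraFT bM; apply: bc.
rewrite mulr0 addr0 [RHS]big1 /raise ?bM // /Fop big1 // => i _.
have bUM : ~~ (b + U_(i) <= M)%MM by rewrite lem_addU bM.
rewrite /lower (_ : Lop c _ = 0) ?mulr0 //.
by apply/eqP; apply: contraNT bUM; apply: Lop_in_box.
Qed.

Lemma iter_Lop_deg k c m : supported_deg k c -> supported_deg (k + m) (iter m Lop c).
Proof. by move=> hc; elim: m => [|m IH]; rewrite ?addn0 // addnS; apply: Lop_deg. Qed.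

Lemma commutator_iter k v m b : in_box v -> supported_deg k v ->
  Fop (iter m.+1 Lop v) b = iter m.+1 Lop (Fop v) b
    + (m.+1)%:R * ((mdeg M)%:R - (2 * k + m)%:R) * iter m Lop v b.
Proof.
move=> bv hv; elim: m b => [|m IH] b.
  by rewrite /= (commutator _ bv hv) addn0 mul1r.
rewrite [iter m.+2 Lop v]/= (commutator _ (@Lop_in_box _) (iter_Lop_deg (m := m.+1) hv)).
rewrite (Lop_ext IH) Lop_linear -addrA -[Lop (iter m Lop v) b]/(iter m.+1 Lop v b) -mulrDl.
by congr (_ + _ * _); rewrite !(natrD, natrM, mulrSr); ring.
Qed.

(* A primitive function (F v = 0) of degree k killed by L^d with d <= |M| - 2k
   is zero: the coefficients (d)(|M| - 2k - d + 1) are nonzero in characteristic 0,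
   so L^d v = 0 descends to L^(d-1) v = 0. *)
Lemma primitive_vanish (charK : [pchar K] =i pred0) k v d :
  in_box v -> supported_deg k v -> Fop v =1 (fun _ => 0) ->
  (d <= mdeg M - 2 * k)%N -> iter d Lop v =1 (fun _ => 0) -> v =1 (fun _ => 0).
Proof.
have natr_eq0 := (pcharf0P _).1 charK.
move=> bv hv Fv; elim: d => [//|d IH] hd Ld; apply: IH; first by lia.
move=> b; have := commutator_iter d b bv hv.
rewrite (Fop0 Ld) (iter_Lop0 _ Fv) add0r -natrB; last by lia.
move=> /esym/eqP; rewrite !mulf_eq0 !natr_eq0 => /orP[/orP[//|/eqP]|/eqP //]; lia.
Qed.

(* Hard Lefschetz for the box: L^(|M|-2k) is injective in degree k.  By
   induction on k: F v is killed by L^(|M|-2k+2), hence vanishes, so v is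
   primitive. *)
Lemma hard_lefschetz_box (charK : [pchar K] =i pred0) k v :
  (2 * k <= mdeg M)%N -> in_box v -> supported_deg k v ->
  iter (mdeg M - 2 * k) Lop v =1 (fun _ => 0) -> v =1 (fun _ => 0).
Proof.
elim: k v => [|k IH] v hk bv hv Lv; apply: (primitive_vanish charK bv hv _ (leqnn _) Lv).
  by move=> b; apply/eqP; apply: contraT => /(Fop_deg hv).
have FLv : iter (mdeg M - 2 * k) Lop (Fop v) =1 (fun _ => 0).
  have -> : (mdeg M - 2 * k = (mdeg M - 2 * k.+1).+2)%N by lia.
  apply: Lop0 => b; have := commutator_iter (mdeg M - 2 * k.+1) b bv hv.
  by rewrite Lv mulr0 addr0 (Fop0 (Lop0 Lv)) => /esym.
apply: (IH _ _ (Fop_in_box bv) _ FLv); first by lia.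
by move=> b /(Fop_deg hv) [].
Qed.

End BoxSl2.

Section BoxProjection.
Variables (K : fieldType) (n : nat).
Local Notation mon := 'X_{1..n}.
Local Notation mp := {mpoly K[n]}.

Definition box_coefs (M : mon) (p : mp) : mon -> K :=
  fun b => if (b <= M)%MM then p@_b else 0.

Lemma mcoeff_mulX (p : mp) (i : 'I_n) b :
  ('X_i * p)@_b = if (0 < b i)%N then p@_(b - U_(i))%MM else 0.
Proof.
rewrite -commr_mpolyX; case: ifP => bi.
  by rewrite -{1}(submK (_ : U_(i) <= b)%MM) ?lep1mP -?lt0n // addmC mcoeffMX.
apply/eqP; rewrite mcoeff_eq0 (perm_mem (msuppMX _ _) b); apply/mapP => -[m' _ e].
by move: bi; rewrite e mnmDE mnm1E eqxx.
Qed.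

Lemma box_coefs_ell M (p : mp) : box_coefs M (ell n K * p) =1 Lop M (box_coefs M p).
Proof.
move=> b; rewrite /box_coefs /Lop /raise /ell big_distrl raddf_sum /=.
case: ifP => bM /=; last by rewrite big1.
apply: eq_bigr => i _; rewrite mcoeff_mulX; case: ifP => // _.
by rewrite (lepm_trans (lem_subr _ _) bM).
Qed.

Lemma box_coefs_ellX M (p : mp) m :
  box_coefs M (ell n K ^+ m * p) =1 iter m (Lop M) (box_coefs M p).
Proof.
elim: m => [|m IH] b; first by rewrite expr0 mul1r.
by rewrite exprS -mulrA box_coefs_ell /=; apply: Lop_ext.
Qed.

Lemma box_coefs_in_box M (p : mp) : in_box M (box_coefs M p).
Proof. by move=> b; rewrite /box_coefs; case: ifP => //; rewrite eqxx. Qed.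

Lemma box_coefs_deg M k (p : mp) : homog_deg k p -> supported_deg k (box_coefs M p).
Proof.
move=> hp b; rewrite /box_coefs; case: ifP => _; last by rewrite eqxx.
by rewrite -mcoeff_msupp => /(dhomog_mf hp).
Qed.

End BoxProjection.

Section MonomialIdeal.
Variables (K : fieldType) (n : nat) (I : {pred {mpoly K[n]}}).
Local Notation mon := 'X_{1..n}.
Local Notation mp := {mpoly K[n]}.
Hypothesis monI : is_monomial_ideal I.

Lemma inI_of_monomials (p : mp) : (forall m, m \in msupp p -> 'X_[m] \in I) -> p \in I.
Proof.
case: monI => -[I0 ID IM] _ H.
rewrite (mpolyE p) big_seq; apply: (big_ind (fun q => q \in I)) => //.
by move=> m /H Xm; rewrite -mul_mpolyC; apply: IM.
Qed.

Lemma inI_dvd (m m' : mon) : (m <= m')%MM -> 'X_[m] \in I -> 'X_[m'] \in I.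
Proof.
case: monI => -[_ _ IM] _ mm Xm.
by rewrite -(submK mm) mpolyXD; apply: IM.
Qed.

Lemma mcoeff_inI (p : mp) (m M : mon) :
  p \in I -> (m <= M)%MM -> 'X_[M] \notin I -> p@_m = 0.
Proof.
case: monI => _ suppI pI mM XM; apply/eqP; rewrite mcoeff_eq0; apply/negP.
by move=> /(suppI _ _ pI) /(inI_dvd mM); apply/negP.
Qed.

Variable t : nat.
Hypothesis artI : artinian_socle_degree I t.
Hypothesis levelI : is_level I t.

Lemma standard_mdeg (m : mon) : 'X_[m] \notin I -> (mdeg m <= t)%N.
Proof.
move=> Xm; rewrite leqNgt; apply: contraNN Xm => lt.
by apply: artI.1 lt _ _; rewrite /homog_deg dhomogX.
Qed.

(* A standard monomial all of whose multiples x_i X^m lie in I is in the socle,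
   hence (levelness) has degree t. *)
Lemma socle_monomial (m : mon) : 'X_[m] \notin I ->
  (forall i : 'I_n, 'X_[(m + U_(i))%MM] \in I) -> mdeg m = t.
Proof.
move=> Xm Hi.
have soc : in_socle I 'X_[m].
  move=> a ha; apply: inI_of_monomials => w; rewrite (perm_mem (msuppMX a m) w).
  case/mapP => u ua ->.
  have /eqP := dhomog_mf ha ua; case/mdeg1P => i /eqP ->; exact: Hi.
case: ((levelI _).1 soc) => g [hg Hg].
apply/eqP; apply: contraT => ne.
have := monI.2 _ m Hg; rewrite mcoeff_msupp mcoeffB mcoeffX eqxx.
rewrite (dhomog_nemf_coeff hg ne) subr0 oner_neq0 => /(_ isT) Xm'.
by rewrite Xm' in Xm.
Qed.

Lemma extend_to_socle (m : mon) : 'X_[m] \notin I ->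
  exists M : mon, [/\ (m <= M)%MM, 'X_[M] \notin I & mdeg M = t].
Proof.
move=> Xm; move: {2}(t - mdeg m)%N (leqnn (t - mdeg m)) => d.
elim: d m Xm => [|d IH] m Xm hd.
  exists m; split => //; first exact: lepm_refl.
  by have := standard_mdeg Xm; lia.
case: (boolP [exists i : 'I_n, 'X_[(m + U_(i))%MM] \notin I]).
  case/existsP => i Xi.
  have hd' : (t - mdeg (m + U_(i)) <= d)%N.
    by have := standard_mdeg Xi; rewrite !mdegD mdeg1; lia.
  have [M [mM XM dM]] := IH _ Xi hd'.
  by exists M; split => //; apply: lepm_trans mM; apply: lem_addr.
rewrite negb_exists => /forallP H.
exists m; split => //; first exact: lepm_refl.
by apply: socle_monomial => // i; move: (H i); rewrite negbK.
Qed.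

End MonomialIdeal.

Lemma ell_power_injective (K : fieldType) (n : nat) (I : {pred {mpoly K[n]}}) (t k : nat)
  (f : {mpoly K[n]}) :
  [pchar K] =i pred0 -> is_monomial_ideal I -> artinian_socle_degree I t ->
  is_level I t -> (2 * k < t)%N -> homog_deg k f ->
  ell n K ^+ (t - 2 * k) * f \in I -> f \in I.
Proof.
move=> charK monI artI levelI kt hf Hin; apply: (inI_of_monomials monI) => m mf.
apply: contraT => Xm; have [M [mM XM dM]] := extend_to_socle monI artI levelI Xm.
have killed : iter (mdeg M - 2 * k) (Lop M) (box_coefs M f) =1 (fun _ => 0).
  move=> b; rewrite dM -box_coefs_ellX /box_coefs; case: ifP => // bM.
  exact: (mcoeff_inI monI Hin bM XM).
have kM : (2 * k <= mdeg M)%N by rewrite dM ltnW.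
have := hard_lefschetz_box charK kM (@box_coefs_in_box _ _ M f) (box_coefs_deg hf) killed m.
by rewrite /box_coefs mM => f_m0; move: mf; rewrite mcoeff_msupp f_m0 eqxx.
Qed.

Theorem lemma2p3 (K : fieldType) (n : nat) (I : {pred {mpoly K[n]}}) (t : nat) :
  [pchar K] =i pred0 ->
  is_monomial_ideal I ->
  artinian_socle_degree I t ->
  is_level I t ->
  forall k : nat, (2 * k < t)%N ->
    mult_injective I ((ell n K) ^+ (t - 2 * k)) k /\
    mult_injective I (ell n K) k.
Proof.
move=> charK monI artI levelI k kt.
have inj := ell_power_injective charK monI artI levelI kt.
split=> f hf Hin; apply: (inj f hf); first exact: Hin.
have -> : (t - 2 * k = (t - 2 * k).-1.+1)%N by lia.
by rewrite exprSr -mulrA; case: monI => -[_ _ IM] _; apply: IM.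
Qed.
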